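(* Let $N\ge 2$ and $K\ge 0$ be integers and let $f_0,f_1,\ldots,f_K$ be integers such that the map $f:\{0,1,\ldots,N-1\}\to\{0,1,\ldots,N-1\}$, $f(x)=\left(\sum_{i=0}^{K} f_i x^i\right) \bmod N$, is a permutation of $\{0,1,\ldots,N-1\}$. Then the interleaver $f$ is maximum contention-free.
   Context: An interleaver of length $N$ is a permutation $f$ of $\{0,1,\ldots,N-1\}$; let $g=f^{-1}$ denote its inverse (the deinterleaver). For a positive integer $W$ dividing $N$, put $M=N/W$. The interleaver $f$ is called contention-free for window size $W$ if for both $\pi=f$ and $\pi=g$ we have $\lfloor \pi(j+tW)/W\rfloor \neq \lfloor \pi(j+vW)/W\rfloor$ for all integers $j,t,v$ with $0\le j<W$ and $0\le t<v<M$. The interleaver is called maximum contention-free if it is contention-free for every window size $W$ that is a positive divisor of $N$. Here $a \bmod N$ denotes the representative of $a$ modulo $N$ in $\{0,\ldots,N-1\}$. *)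

From mathcomp Require Import all_boot all_order all_algebra.
Set Implicit Arguments. Unset Strict Implicit. Unset Printing Implicit Defensive.
Import Order.TTheory GRing.Theory Num.Theory.

Definition is_perm_on (N : nat) (f : nat -> nat) : Prop :=
  (forall x, x < N -> f x < N) /\
  (forall x y, x < N -> y < N -> f x = f y -> x = y).

(* The inverse (deinterleaver) g = f^{-1}: g y is the unique x < N with f x = y
   (found by linear search; equals N if no such x exists). *)
Definition inv_on (N : nat) (f : nat -> nat) (y : nat) : nat :=
  find (fun x => f x == y) (iota 0 N).

Definition cf_cond (N W : nat) (pi : nat -> nat) : Prop :=
  forall j t v, j < W -> t < v -> v < N %/ W ->
    pi (j + t * W) %/ W <> pi (j + v * W) %/ W.

Definition contention_free (N W : nat) (f : nat -> nat) : Prop :=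
  cf_cond N W f /\ cf_cond N W (inv_on N f).

Definition max_contention_free (N : nat) (f : nat -> nat) : Prop :=
  forall W, 0 < W -> W %| N -> contention_free N W f.

Definition poly_interleaver (N K : nat) (c : nat -> int) (x : nat) : nat :=
  `| ((\sum_(i < K.+1) c i * (x%:Z) ^+ i) %% (N%:Z))%Z |%N.

From mathcomp Require Import all_boot all_order all_algebra zify.
Import Order.TTheory GRing.Theory Num.Theory.
Set Implicit Arguments. Unset Strict Implicit. Unset Printing Implicit Defensive.

(* Since a window size W divides N, an integer polynomial taken mod N maps
   congruent arguments mod W to congruent values mod W.  Contention-freeness
   of such a map pi is then automatic: the entries j + tW of one column are
   congruent mod W, so their images are congruent mod W, and two of them in
   the same window would be equal, contradicting injectivity.  For the
   inverse permutation one needs the converse implication for f; it holds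
   because f induces a map on Z/W that is onto, as f is onto [0, N), and
   hence injective. *)

Lemma onto_injF (T : finType) (h : T -> T) :
  (forall y, y \in codom h) -> injective h.
Proof.
move=> h_onto; have /image_injP h_inj : #|codom h| == #|T|.
  by apply/eqP/eq_card.
by move=> x y; apply: h_inj.
Qed.

Section PermOn.

Variables (N : nat) (f : nat -> nat).
Hypothesis f_perm : is_perm_on N f.

Lemma perm_on_onto y : y < N -> exists2 x, x < N & f x = y.
Proof.
case: f_perm => f_lt f_inj y_lt.
pose F (i : 'I_N) : 'I_N := Ordinal (f_lt i (ltn_ord i)).
have F_inj : injective F.
  by move=> i j /(congr1 val) /= /f_inj eq_ij; apply/val_inj/eq_ij.
have /codomP [x /(congr1 val) /= ->] := injF_onto F_inj (Ordinal y_lt).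
by exists x.
Qed.

Lemma inv_on_spec y : y < N -> inv_on N f y < N /\ f (inv_on N f y) = y.
Proof.
move=> y_lt; have [x x_lt fx] := perm_on_onto y_lt.
have has_y : has (fun x => f x == y) (iota 0 N).
  by apply/hasP; exists x; rewrite ?mem_iota ?fx.
have inv_lt : inv_on N f y < N.
  by rewrite /inv_on -[X in _ < X](size_iota 0 N) -has_find.
split=> //; have := nth_find 0 has_y.
by rewrite -/(inv_on N f y) nth_iota // add0n => /eqP.
Qed.

Lemma inv_on_lt y : y < N -> inv_on N f y < N.
Proof. by case/inv_on_spec. Qed.

Lemma inv_onK y : y < N -> f (inv_on N f y) = y.
Proof. by case/inv_on_spec. Qed.

Lemma inv_on_inj x y : x < N -> y < N -> inv_on N f x = inv_on N f y -> x = y.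
Proof. by move=> x_lt y_lt eq_inv; rewrite -(inv_onK x_lt) -(inv_onK y_lt) eq_inv. Qed.

End PermOn.

Definition mod_compatible (N W : nat) (pi : nat -> nat) : Prop :=
  forall x y, x < N -> y < N -> x = y %[mod W] -> pi x = pi y %[mod W].

Section ModCompatible.

Variables (N W : nat) (f : nat -> nat).
Hypotheses (W_gt0 : 0 < W) (W_dvd_N : W %| N).
Hypotheses (f_perm : is_perm_on N f) (f_compat : mod_compatible N W f).

Lemma perm_on_mod_reflect x y : x < N -> y < N ->
  f x = f y %[mod W] -> x = y %[mod W].
Proof.
move=> x_lt y_lt fxy.
have W_leN r : r < W -> r < N.
  by move=> r_lt; apply: leq_trans r_lt (dvdn_leq (leq_ltn_trans _ x_lt) _).
have res_compat z : z < N -> f (z %% W) = f z %[mod W].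
  by move=> z_lt; apply: f_compat; rewrite ?modn_mod // W_leN ?ltn_pmod.
pose h (r : 'I_W) : 'I_W := Ordinal (ltn_pmod (f r) W_gt0).
have h_onto : forall s, s \in codom h.
  move=> s; have [z z_lt fz] := perm_on_onto f_perm (W_leN _ (ltn_ord s)).
  apply/codomP; exists (Ordinal (ltn_pmod z W_gt0)); apply: val_inj => /=.
  by rewrite res_compat // fz modn_small.
have /(congr1 val) // : Ordinal (ltn_pmod x W_gt0) = Ordinal (ltn_pmod y W_gt0).
by apply: (onto_injF h_onto); apply: val_inj; rewrite /= !res_compat.
Qed.

Lemma inv_on_mod_compatible : mod_compatible N W (inv_on N f).
Proof.
move=> x y x_lt y_lt xy; apply: perm_on_mod_reflect; rewrite ?inv_on_lt //.
by rewrite !inv_onK.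
Qed.

End ModCompatible.

Lemma cf_cond_mod_compatible N W (pi : nat -> nat) :
  0 < W -> W %| N ->
  (forall x y, x < N -> y < N -> pi x = pi y -> x = y) ->
  mod_compatible N W pi -> cf_cond N W pi.
Proof.
move=> W_gt0 W_dvd_N pi_inj pi_compat j t v j_lt t_lt_v v_lt.
have col_lt s : s < N %/ W -> j + s * W < N.
  move=> s_lt; have : s.+1 * W <= N by rewrite -(divnK W_dvd_N) leq_mul2r s_lt orbT.
  by rewrite mulSn; lia.
have t_lt : t < N %/ W by apply: ltn_trans v_lt.
have col_mod s : j + s * W = j %[mod W] by rewrite addnC modnMDl.
move=> same_window.
have same_res : pi (j + t * W) = pi (j + v * W) %[mod W].
  by apply: pi_compat; rewrite ?col_lt // !col_mod.
have /pi_inj : pi (j + t * W) = pi (j + v * W).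
  by rewrite (divn_eq (pi (j + t * W)) W) same_window same_res -divn_eq.
move=> /(_ (col_lt _ t_lt) (col_lt _ v_lt)) /addnI /eqP.
by rewrite eqn_mul2r gtn_eqF //= => /eqP eq_tv; rewrite eq_tv ltnn in t_lt_v.
Qed.

Theorem max_contention_free_mod_compatible N (f : nat -> nat) :
  is_perm_on N f -> (forall W, 0 < W -> W %| N -> mod_compatible N W f) ->
  max_contention_free N f.
Proof.
move=> f_perm f_compat W W_gt0 W_dvd_N.
have f_compatW := f_compat W W_gt0 W_dvd_N.
split; apply: cf_cond_mod_compatible => //; first by case: f_perm.
  exact: inv_on_inj.
exact: inv_on_mod_compatible.
Qed.

Lemma modz_dvdm (d m n : int) : (d %| m)%Z -> ((n %% m)%Z = n %[mod d])%Z.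
Proof.
move=> d_dvd_m; apply/eqP; rewrite eqz_mod_dvd {2}(divz_eq n m).
by rewrite opprD addrCA subrr addr0 rpredN dvdz_mull.
Qed.

Lemma dvdz_sub_sum_pow (n : nat) (c : nat -> int) (x y : int) :
  (x - y %| (\sum_(i < n) c i * x ^+ i - \sum_(i < n) c i * y ^+ i)%R)%Z.
Proof.
rewrite -sumrB rpred_sum // => i _.
by rewrite -mulrBr subrXX dvdz_mull // dvdz_mulr.
Qed.

Lemma poly_interleaver_mod_compatible N K c W : 0 < N -> W %| N ->
  mod_compatible N W (poly_interleaver N K c).
Proof.
move=> N_gt0 W_dvd_N x y _ _ xy.
set P := fun z : nat => (\sum_(i < K.+1) c i * z%:Z ^+ i)%R.
have val_f z : Posz (poly_interleaver N K c z) = (P z %% N)%Z.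
  by rewrite /poly_interleaver gez0_abs // modz_ge0 // eqz_nat -lt0n.
apply/eqP; rewrite -(eqz_nat (_ %% _)) -!modz_nat !val_f.
rewrite !modz_dvdm ?dvdzE // eqz_mod_dvd.
apply: dvdz_trans (dvdz_sub_sum_pow _ _ _ _).
by rewrite -eqz_mod_dvd !modz_nat xy.
Qed.

Theorem corollary1 (N K : nat) (c : nat -> int) :
  2 <= N ->
  is_perm_on N (poly_interleaver N K c) ->
  max_contention_free N (poly_interleaver N K c).
Proof.
move=> N_ge2 f_perm; apply: max_contention_free_mod_compatible => // W _.
by apply: poly_interleaver_mod_compatible; apply: ltnW.
Qed.
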